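(* Let $Q$ be a quiver whose underlying unoriented graph is a tree, and let $\mathbb V$ be an indecomposable representation of $Q$ over $\mathbb{F}_1$. Then every entry of the dimension vector $(\dim V_i)_{i\in I}$ is $0$ or $1$, the set of vertices $i$ with $\dim V_i=1$ spans a connected subgraph of $Q$, and every edge map between two one-dimensional spaces is an isomorphism. Consequently indecomposable representations of $Q$ (up to isomorphism) correspond bijectively to nonempty connected subgraphs of $Q$.
   Context: $\mathrm{Vect}_{\mathbb{F}_1}$: finite pointed sets $(V,0_V)$ with pointed maps injective on the complement of the preimage of the base point; $\dim V=|V|-1$; $V\oplus W$ is $V\sqcup W$ with base points identified. A representation $\mathbb V=(V_i,f_h)$ of a quiver $Q$ (vertices $I$, edges $E$, $h'$/$h''$ source/target) over $\mathbb{F}_1$ consists of $V_i\in\mathrm{Vect}_{\mathbb{F}_1}$ and morphisms $f_h:V_{h'}\to V_{h''}$; direct sums are vertexwise; $\mathbb V$ is indecomposable if nonzero and not a direct sum of two nonzero representations. A quiver is a tree if its underlying unoriented graph contains no cycles and no multiple edges. The dimension vector of $\mathbb V$ is $(\dim V_i)_{i\in I}$. *)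

From mathcomp Require Import all_boot.
Set Implicit Arguments. Unset Strict Implicit. Unset Printing Implicit Defensive.

(* A (finite) quiver: vertex type I, edge type E, source s = h', target t = h''. *)

Section Quiver.
Variables (I E : finType) (s t : E -> I).

Definition joins (h : E) (i j : I) : bool :=
  ((s h == i) && (t h == j)) || ((s h == j) && (t h == i)).

(* A cycle in the underlying unoriented (multi)graph: pairwise distinct vertices
   v_0,...,v_n and pairwise distinct edges e_0,...,e_n with e_k joining v_k and
   v_{k+1 mod n+1}.  (n = 0: a loop; n = 1: a pair of parallel edges.) *)
Definition has_cycle : Prop :=
  exists n (v : 'I_n.+1 -> I) (e : 'I_n.+1 -> E),
    injective v /\ injective e /\ forall k, joins (e k) (v k) (v (ordS k)).

Definition no_multiple_edges : Prop :=
  forall h h' i j, joins h i j -> joins h' i j -> h = h'.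

Definition is_tree : Prop := ~ has_cycle /\ no_multiple_edges.

Definition adj_in (S : {set I}) : rel I :=
  fun i j => [&& i \in S, j \in S & [exists h, joins h i j]].

Definition connected_in (S : {set I}) : Prop :=
  forall i j, i \in S -> j \in S -> connect (adj_in S) i j.

(* An object (V, 0_V) of Vect_F1 is encoded by the finite set V \ {0_V} of its
   nonzero elements; a pointed morphism f : V -> W injective off f^{-1}(0_W)
   is encoded by the partial map V\{0} -> option (W\{0}) (None = 0_W) that is
   injective on the elements it does not send to 0.  dim V = #|V \ {0}|. *)
Record F1rep := {
  sp : I -> finType;
  mp : forall h : E, sp (s h) -> option (sp (t h));
  mp_inj : forall h (x y : sp (s h)) z, mp x = Some z -> mp y = Some z -> x = y
}.

Definition dimv (V : F1rep) (i : I) : nat := #|sp V i|.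

Definition nonzero_rep (V : F1rep) : Prop := exists i, 0 < dimv V i.

Definition rep_iso (V W : F1rep) : Prop :=
  exists phi : forall i, sp V i -> sp W i,
    (forall i, bijective (phi i)) /\
    (forall h (x : sp V (s h)), omap (phi (t h)) (mp x) = mp (phi (s h) x)).

(* direct sum: vertexwise wedge sum, i.e. disjoint union of nonzero elements *)
Definition dsum_map (V W : F1rep) (h : E) (x : (sp V (s h) + sp W (s h))%type)
  : option (sp V (t h) + sp W (t h))%type :=
  match x with
  | inl a => omap inl (mp a)
  | inr b => omap inr (mp b)
  end.

Lemma dsum_map_inj (V W : F1rep) h x y z :
  @dsum_map V W h x = Some z -> @dsum_map V W h y = Some z -> x = y.
Proof.
case: x => [a|b]; case: y => [a'|b'] /=.
- case Ea: (mp a) => [u|] //=; case Eb: (mp a') => [u'|] //= [<-] [E1].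
  by rewrite (mp_inj Ea (etrans Eb (congr1 Some E1))).
- by case: (mp a) => //= ? [<-]; case: (mp b').
- by case: (mp b) => //= ? [<-]; case: (mp a').
- case Ea: (mp b) => [u|] //=; case Eb: (mp b') => [u'|] //= [<-] [E1].
  by rewrite (mp_inj Ea (etrans Eb (congr1 Some E1))).
Qed.

Definition dsum (V W : F1rep) : F1rep :=
  {| sp := fun i => (sp V i + sp W i)%type;
     mp := @dsum_map V W;
     mp_inj := @dsum_map_inj V W |}.

Definition indecomposable (V : F1rep) : Prop :=
  nonzero_rep V /\
  ~ (exists W1 W2, nonzero_rep W1 /\ nonzero_rep W2 /\ rep_iso V (dsum W1 W2)).

Definition rep_support (V : F1rep) : {set I} := [set i | 0 < dimv V i].

End Quiver.

(* Replace a representation V over F_1 by its coefficient quiver: the graph whose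
   vertices are the nonzero elements of all the V_i, with an edge from a to f_h(a)
   for every edge h of Q.  A union of connected components of this graph spans a
   subrepresentation with a complementary one, so V is indecomposable exactly when
   the graph is nonempty and connected.
   When Q is a tree, a path without repetitions in the coefficient quiver also
   visits every vertex of Q at most once: a first repetition would close a cycle
   of Q, or step back along the edge just used, which returns to the same element
   because f_h is a partial injection.  Hence two elements over the same vertex
   coincide, and the elements over the two ends of an edge h are joined by a
   single step along h.  Conversely, one element at each vertex of a connected
   set S, with all possible edge maps, has a connected coefficient quiver. *)

From mathcomp Require Import all_boot zify.
Set Implicit Arguments. Unset Strict Implicit. Unset Printing Implicit Defensive.

Lemma val_ordS n (k : 'I_n.+1) : val (ordS k) = if val k == n then 0 else k.+1.
Proof.
rewrite /=; case: eqP => [->|/eqP nk]; first exact: modnn.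
by apply: modn_small; have := ltn_ord k; lia.
Qed.

Section Graph.
Variables (I E : finType) (s t : E -> I).

Definition adjacent : rel I := fun i j => [exists h, joins s t h i j].

Lemma joinsC h i j : joins s t h i j = joins s t h j i.
Proof. by rewrite /joins orbC. Qed.

Lemma joins_st h : joins s t h (s h) (t h).
Proof. by rewrite /joins !eqxx. Qed.

Lemma joins_ends h i j k l : joins s t h i j -> joins s t h k l ->
  (i == k) && (j == l) || (i == l) && (j == k).
Proof.
by rewrite /joins => /orP[]/andP[/eqP<- /eqP<-] /orP[]/andP[/eqP<- /eqP<-];
  rewrite !eqxx ?orbT.
Qed.

Section Acyclic.
Hypothesis acyclic : ~ has_cycle s t.

Lemma acyclic_loopless h : s h != t h.
Proof.
apply/eqP => st_h; apply: acyclic.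
exists 0, (fun=> s h), (fun=> h); split; [|split].
- by move=> k l _; rewrite (ord1 k) (ord1 l).
- by move=> k l _; rewrite (ord1 k) (ord1 l).
- by move=> k; rewrite {2}st_h joins_st.
Qed.

(* With only two vertices the closing edge could be the one already traversed. *)
Lemma acyclic_path_not_closed v0 v : uniq (v0 :: v) -> 1 < size v ->
  path adjacent v0 v -> ~~ adjacent (last v0 v) v0.
Proof.
move=> uniq_v size_v path_v; apply/negP => closing; apply: acyclic.
set n := size v in size_v.
pose w (k : 'I_n.+1) := nth v0 (v0 :: v) k.
have w_inj : injective w.
  by move=> k l /eqP; rewrite nth_uniq // => /eqP /val_inj.
have adj_w k : adjacent (w k) (w (ordS k)).
  rewrite /w val_ordS /=; case: eqP => [->|nk].
    by rewrite -[n]/(size (v0 :: v)).-1 nth_last.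
  by apply: (pathP v0 path_v); move: nk (ltn_ord k); rewrite /n; lia.
have [e join_e] := fin_all_exists (fun k => existsP (adj_w k)).
exists n, w, e; split; [exact: w_inj | split=> // k l e_kl].
have join_l := join_e l; rewrite -e_kl in join_l.
have /orP[/andP[/eqP/w_inj //]|/andP[/eqP/w_inj kl /eqP/w_inj lk]] :=
  joins_ends (join_e k) join_l.
apply/val_inj; move: (congr1 val kl) (congr1 val lk) (ltn_ord k) (ltn_ord l) size_v.
by rewrite !val_ordS /n /=; do 2 case: eqP; lia.
Qed.

End Acyclic.

Section Tree.
Hypothesis tree : is_tree s t.

Lemma tree_edge_unique h h' : s h' = s h -> t h' = t h -> h' = h.
Proof.
move=> sh th; apply: (proj2 tree _ _ (s h) (t h)); last exact: joins_st.
by rewrite -sh -th joins_st.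
Qed.

Lemma tree_edge_reversed h h' : s h' = t h -> t h' = s h -> False.
Proof.
move=> sh th; have hh : h' = h.
  apply: (proj2 tree _ _ (s h) (t h)); last exact: joins_st.
  by rewrite joinsC -sh -th joins_st.
by move: (acyclic_loopless (proj1 tree) h); rewrite -th hh eqxx.
Qed.

End Tree.

End Graph.

Section Elements.
Variables (I E : finType) (s t : E -> I) (V : F1rep s t).

(* The vertices of the coefficient quiver of V. *)
Definition elt : finType := {i : I & sp V i}.
Definition inelt i (a : sp V i) : elt := Tagged (sp V) a.

Definition arrow : rel elt := fun x y =>
  [exists h, [exists a : sp V (s h),
     (inelt a == x) && (omap (@inelt (t h)) (mp a) == Some y)]].

Lemma arrowP x y :
  reflect (exists h (a : sp V (s h)) b, [/\ mp a = Some b, x = inelt a & y = inelt b])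
          (arrow x y).
Proof.
apply: (iffP existsP) => [[h /existsP[a /andP[/eqP<-]]]|[h [a [b [ab -> ->]]]]].
  by case ab: (mp a) => [b|] //= /eqP[<-]; exists h, a, b.
by exists h; apply/existsP; exists a; rewrite ab !eqxx.
Qed.

Definition linked : rel elt := fun x y => arrow x y || arrow y x.

Lemma linked_sym : symmetric linked.
Proof. by move=> x y; rewrite /linked orbC. Qed.

Lemma linked_mp h (a : sp V (s h)) b : mp a = Some b -> linked (inelt a) (inelt b).
Proof. by move=> ab; apply/orP; left; apply/arrowP; exists h, a, b. Qed.

Lemma linked_adjacent x y : linked x y -> adjacent s t (tag x) (tag y).
Proof.
case/orP=> /arrowP[h [a [b [_ -> ->]]]]; apply/existsP; exists h => /=.
  exact: joins_st.
by rewrite joinsC joins_st.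
Qed.

Lemma mp_closed (Q : {pred elt}) :
  (forall h (a : sp V (s h)) b, mp a = Some b -> (inelt a \in Q) = (inelt b \in Q)) ->
  closed linked Q.
Proof.
by move=> Qmp x y /orP[]/arrowP[h [a [b [/Qmp Qab -> ->]]]].
Qed.

End Elements.

Arguments arrow {I E s t} V.
Arguments linked {I E s t} V.

Section Decomposition.
Variables (I E : finType) (s t : E -> I) (V : F1rep s t).

Section Restriction.
Variable Q : {pred elt V}.

Definition restr_sp i : finType := {a : sp V i | inelt a \in Q}.

Definition restr_mp h (a : restr_sp (s h)) : option (restr_sp (t h)) :=
  obind insub (mp (val a)).

Lemma restr_mpE h (a : restr_sp (s h)) b :
  restr_mp a = Some b -> mp (val a) = Some (val b).
Proof. by rewrite /restr_mp; case: (mp _) => //= c; case: insubP => // c' _ <- [->]. Qed.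

Lemma restr_mp_inj h (a a' : restr_sp (s h)) b :
  restr_mp a = Some b -> restr_mp a' = Some b -> a = a'.
Proof. by move=> /restr_mpE ab /restr_mpE a'b; apply/val_inj/(mp_inj ab a'b). Qed.

Definition restr : F1rep s t :=
  {| sp := restr_sp; mp := restr_mp; mp_inj := restr_mp_inj |}.

Lemma restr_nonzero x : x \in Q -> nonzero_rep restr.
Proof. by case: x => i a Qa; exists i; apply/card_gt0P; exists (exist _ a Qa). Qed.

End Restriction.

Section Splitting.
Variable Q : {pred elt V}.
Hypothesis Q_closed : closed (linked V) Q.

Definition split_elt i (a : sp V i) : sp (dsum (restr Q) (restr [predC Q])) i :=
  match sumbool_of_bool (inelt a \in Q) with
  | left Qa => inl (exist _ a Qa)
  | right nQa => inr (exist _ a (negbT nQa))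
  end.

Definition join_elt i (u : sp (dsum (restr Q) (restr [predC Q])) i) : sp V i :=
  match u with inl b | inr b => val b end.

Lemma split_eltK i : cancel (@split_elt i) (@join_elt i).
Proof. by move=> a; rewrite /split_elt; case: sumbool_of_bool. Qed.

Lemma split_elt_in i (a : sp V i) (Qa : inelt a \in Q) : split_elt a = inl (exist _ a Qa).
Proof.
rewrite /split_elt; case: sumbool_of_bool => Qa'; first by congr inl; apply: val_inj.
by exfalso; move: Qa; rewrite Qa'.
Qed.

Lemma split_elt_notin i (a : sp V i) (nQa : inelt a \in [predC Q]) :
  split_elt a = inr (exist _ a nQa).
Proof.
rewrite /split_elt; case: sumbool_of_bool => Qa; last by congr inr; apply: val_inj.
by exfalso; move: nQa; rewrite inE /= Qa.
Qed.

Lemma join_eltK i : cancel (@join_elt i) (@split_elt i).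
Proof. by case=> -[a Qa] /=; [rewrite split_elt_in | rewrite split_elt_notin]. Qed.

Lemma split_iso : rep_iso V (dsum (restr Q) (restr [predC Q])).
Proof.
exists split_elt; split=> [i|h a].
  by exists (@join_elt i); [apply: split_eltK | apply: join_eltK].
have [Qa|nQa] := boolP (inelt a \in Q).
- rewrite (split_elt_in Qa) /= /restr_mp /=.
  case ab: (mp a) => [b|] //=.
  have Qb : inelt b \in Q by rewrite -(Q_closed (linked_mp ab)).
  by rewrite (split_elt_in Qb) insubT.
- rewrite (split_elt_notin (nQa : inelt a \in [predC Q])) /= /restr_mp /=.
  case ab: (mp a) => [b|] //=.
  have nQb : inelt b \in [predC Q] by rewrite inE /= -(Q_closed (linked_mp ab)).
  by rewrite (split_elt_notin nQb) insubT.
Qed.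

End Splitting.

Lemma linked_connect_sym : connect_sym (linked V).
Proof. exact/sym_connect_sym/linked_sym. Qed.

Lemma indecomposable_connect : indecomposable V -> forall x y, connect (linked V) x y.
Proof.
move=> [_ indec] x y; apply/negPn/negP => nxy; apply: indec.
have Q_closed := connect_closed linked_connect_sym x.
exists (restr (connect (linked V) x)), (restr [predC connect (linked V) x]).
split; [|split; last exact: split_iso].
- by apply: (@restr_nonzero _ x); rewrite inE connect0.
- by apply: (@restr_nonzero _ y); rewrite inE /= nxy.
Qed.

Lemma connect_indecomposable :
  nonzero_rep V -> (forall x y, connect (linked V) x y) -> indecomposable V.
Proof.
move=> nzV conn; split=> // -[W1 [W2 [[i1 nzW1] [[i2 nzW2] [phi [phi_bij phi_mp]]]]]].
pose Q : {pred elt V} := [pred x | if phi (tag x) (tagged x) is inl _ then true else false].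
have Q_closed : closed (linked V) Q.
  apply: mp_closed => h a b ab; rewrite !inE /=.
  have := phi_mp h a; rewrite ab /=.
  by case: (phi (s h) a) => u /=; case: (mp u) => //= w [->].
have [w1 _] := card_gt0P nzW1; have [g1 _ g1K] := phi_bij i1.
have [w2 _] := card_gt0P nzW2; have [g2 _ g2K] := phi_bij i2.
have := closed_connect Q_closed (conn (inelt (g1 (inl w1))) (inelt (g2 (inr w2)))).
by rewrite !inE /= g1K g2K.
Qed.

Lemma indecomposableP :
  indecomposable V <-> nonzero_rep V /\ forall x y, connect (linked V) x y.
Proof.
split=> [indecV | [nzV conn]]; last exact: connect_indecomposable.
by split; [case: indecV | exact: indecomposable_connect].
Qed.

End Decomposition.

Lemma card_le1_eq (T : finType) : #|T| <= 1 -> forall x y : T, x = y.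
Proof. by move/card_le1_eqP=> T_le1 x y; apply: T_le1. Qed.

Lemma dimv0_mp (I E : finType) (s t : E -> I) (V : F1rep s t) h (a : sp V (s h)) :
  dimv V (t h) = 0 -> mp a = None.
Proof. by case ab: (mp a) => [b|] // /card0_eq/(_ b). Qed.

Section TreeRepresentation.
Variables (I E : finType) (s t : E -> I).
Hypothesis tree : is_tree s t.
Variable V : F1rep s t.

Lemma linked_tag_neq x y : linked V x y -> tag x != tag y.
Proof.
case/orP=> /arrowP[h [a [b [_ -> ->]]]] /=; last rewrite eq_sym;
  exact: acyclic_loopless (proj1 tree) h.
Qed.

(* In a tree both steps use the same edge h, and f_h is a partial injection. *)
Lemma linked_backtrack x y z : linked V x y -> linked V y z -> tag z = tag x -> z = x.
Proof.
case/orP=> /arrowP[h [a [b [ab -> ->]]]] /orP[]/arrowP[h' [a' [b' [a'b']]]].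
- move=> /(congr1 tag) /= tb -> /= tb'.
  by case: (tree_edge_reversed tree (esym tb) tb').
- move=> -> eb /= sa; have /= tb := congr1 tag eb.
  have hh := tree_edge_unique tree sa (esym tb); subst h'.
  by rewrite -(eq_from_Tagged eb) in a'b'; rewrite (mp_inj ab a'b').
- move=> ea -> /= tb; have /= sa := congr1 tag ea.
  have hh := tree_edge_unique tree (esym sa) tb; subst h'.
  by rewrite -(eq_from_Tagged ea) ab in a'b'; case: a'b' => ->.
- move=> -> /(congr1 tag) /= sa sb.
  by case: (tree_edge_reversed tree sb (esym sa)).
Qed.

Lemma linked_path_short x p : path (linked V) x p -> uniq (map tag (x :: p)) ->
  adjacent s t (tag (last x p)) (tag x) -> size p <= 1.
Proof.
move=> path_p uniq_p closing; rewrite leqNgt; apply/negP => size_p.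
have path_tags := homo_path (@linked_adjacent _ _ _ _ V) path_p.
have := acyclic_path_not_closed (proj1 tree) uniq_p.
by rewrite size_map last_map closing => /(_ size_p path_tags).
Qed.

Lemma linked_path_not_closed x p y : path (linked V) x p -> uniq (map tag (x :: p)) ->
  linked V (last x p) y -> tag y = tag x -> y = x.
Proof.
move=> path_p uniq_p link_y tag_y.
have : size p <= 1.
  by apply: linked_path_short path_p uniq_p _; rewrite -tag_y linked_adjacent.
case: p path_p link_y {uniq_p} => [|u [|]] //=.
- by move=> _ /linked_tag_neq; rewrite tag_y eqxx.
- by case/andP=> xu _ uy _; apply: linked_backtrack xu uy tag_y.
Qed.

Lemma uniq_path_uniq_tags x p : path (linked V) x p -> uniq (x :: p) ->
  uniq (map tag (x :: p)).
Proof.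
elim/last_ind: p => [//|p y IH].
rewrite rcons_path -rcons_cons rcons_uniq => /andP[path_p link_y] /andP[y_new uniq_p].
rewrite map_rcons rcons_uniq (IH path_p uniq_p) andbT.
apply/mapP=> -[z z_in tag_yz]; move: y_new path_p link_y (IH path_p uniq_p).
rewrite -[path _ x p]/(sorted (linked V) (x :: p)) -[last x p]/(last x (x :: p)).
case/splitPr: z_in => p1 p2.
rewrite sorted_cat_cons last_cat /= map_cat cat_uniq mem_cat inE => y_new.
case/andP=> _ path_p2 link_y /and3P[_ _ uniq_p2].
by move: y_new; rewrite (linked_path_not_closed path_p2 uniq_p2 link_y tag_yz) eqxx orbT.
Qed.

Lemma uniq_path_tag_last x p : path (linked V) x p -> uniq (x :: p) ->
  tag (last x p) = tag x -> p = [::].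
Proof.
case: p => [//|y p] path_p uniq_p /= last_tag; have := uniq_path_uniq_tags path_p uniq_p.
by rewrite /= -last_tag (map_f tag (mem_last y p)).
Qed.

Lemma linked_inelt_mp h (a : sp V (s h)) (b : sp V (t h)) :
  linked V (inelt a) (inelt b) -> mp a = Some b.
Proof.
case/orP=> /arrowP[h' [a' [b' [a'b' ea eb]]]].
- have /= sa := congr1 tag ea; have /= tb := congr1 tag eb.
  have hh := tree_edge_unique tree (esym sa) (esym tb); subst h'.
  by rewrite (eq_from_Tagged ea) (eq_from_Tagged eb).
- have /= tb := congr1 tag ea; have /= sa := congr1 tag eb.
  by case: (tree_edge_reversed tree (esym tb) (esym sa)).
Qed.

Section Indecomposable.
Hypothesis indecV : indecomposable V.

Lemma indecomposable_uniq_path x y :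
  exists p, [/\ path (linked V) x p, uniq (x :: p) & last x p = y].
Proof.
case/connectP: (indecomposable_connect indecV x y) => p /shortenP[p' path_p' uniq_p' _] ->.
by exists p'.
Qed.

Lemma tree_indecomposable_dimv_le1 i : dimv V i <= 1.
Proof.
apply/card_le1_eqP => a b _ _.
have [p [path_p uniq_p last_p]] := indecomposable_uniq_path (inelt a) (inelt b).
have p0 : p = [::] by apply: uniq_path_tag_last path_p uniq_p _; rewrite last_p.
by subst p; rewrite (eq_from_Tagged last_p).
Qed.

Lemma tree_indecomposable_dimv_tag (x : elt V) : dimv V (tag x) = 1.
Proof.
apply/eqP; rewrite eqn_leq tree_indecomposable_dimv_le1; case: x => i a /=.
by apply/card_gt0P; exists a.
Qed.

Lemma tree_indecomposable_mp h (a : sp V (s h)) (b : sp V (t h)) : mp a = Some b.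
Proof.
have [p [path_p uniq_p last_p]] := indecomposable_uniq_path (inelt a) (inelt b).
have : size p <= 1.
  apply: linked_path_short path_p (uniq_path_uniq_tags path_p uniq_p) _.
  by rewrite last_p; apply/existsP; exists h; rewrite /= joinsC joins_st.
case: p path_p last_p {uniq_p} => [|y [|]] //=.
  by move=> _ /(congr1 tag)/eqP; rewrite (negbTE (acyclic_loopless (proj1 tree) h)).
by move=> + yb; rewrite yb => /andP[link_ab _] _; apply: linked_inelt_mp.
Qed.

Lemma tree_indecomposable_edge_bij h : dimv V (s h) = 1 -> dimv V (t h) = 1 ->
  bijective (fun x : option (sp V (s h)) => if x is Some a then mp a else None).
Proof.
move=> dim_s dim_t.
have /card_gt0P[a _] : 0 < dimv V (s h) by rewrite dim_s.
have /card_gt0P[b _] : 0 < dimv V (t h) by rewrite dim_t.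
have unique_s := card_le1_eq (tree_indecomposable_dimv_le1 (s h)).
have unique_t := card_le1_eq (tree_indecomposable_dimv_le1 (t h)).
exists (fun y : option (sp V (t h)) => if y is Some _ then Some a else None).
  by case=> [a'|] //=; rewrite (tree_indecomposable_mp a' b) (unique_s a a').
by case=> [b'|] //=; rewrite (tree_indecomposable_mp a b) (unique_t b b').
Qed.

Lemma tree_indecomposable_support : rep_support V = [set i | dimv V i == 1].
Proof.
apply/setP => i; rewrite !inE eqn_leq tree_indecomposable_dimv_le1.
by case: (dimv V i).
Qed.

Lemma tree_indecomposable_connected : connected_in s t [set i | dimv V i == 1].
Proof.
move=> i j; rewrite !inE => dim_i dim_j.
have /card_gt0P[a _] : 0 < dimv V i by rewrite (eqP dim_i).
have /card_gt0P[b _] : 0 < dimv V j by rewrite (eqP dim_j).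
rewrite -[i]/(tag (inelt a)) -[j]/(tag (inelt b)).
case/connectP: (indecomposable_connect indecV (inelt a) (inelt b)) => p path_p ->.
apply/connectP; exists (map tag p); last by rewrite last_map.
apply: homo_path path_p => x y /linked_adjacent adj_xy.
by rewrite /adj_in !inE !tree_indecomposable_dimv_tag.
Qed.

End Indecomposable.

End TreeRepresentation.

Lemma rep_iso_support (I E : finType) (s t : E -> I) (V W : F1rep s t) :
  rep_iso V W -> rep_support V = rep_support W.
Proof.
by case=> phi [phi_bij _]; apply/setP => i; rewrite !inE /dimv (bij_eq_card (phi_bij i)).
Qed.

Section SameSupport.
Variables (I E : finType) (s t : E -> I).
Hypothesis tree : is_tree s t.
Variables V W : F1rep s t.
Hypotheses (indecV : indecomposable V) (indecW : indecomposable W).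
Hypothesis same_support : rep_support V = rep_support W.

Lemma same_support_dimv i : dimv V i = dimv W i.
Proof.
have := congr1 (fun S : {set I} => i \in S) same_support; rewrite /= !inE.
move: (tree_indecomposable_dimv_le1 tree indecV i).
move: (tree_indecomposable_dimv_le1 tree indecW i).
by case: (dimv V i) => [|[|]] //; case: (dimv W i) => [|[|]].
Qed.

Definition transport i (a : sp V i) : sp W i :=
  enum_val (cast_ord (same_support_dimv i) (enum_rank a)).

Lemma transport_iso : rep_iso V W.
Proof.
have unique_W i := card_le1_eq (tree_indecomposable_dimv_le1 tree indecW i).
exists transport; split=> [i|h a].
  exists (fun b => enum_val (cast_ord (esym (same_support_dimv i)) (enum_rank b)));
    move=> x; exact/card_le1_eq/tree_indecomposable_dimv_le1.
have [dim0|/card_gt0P[b _]] := posnP (dimv V (t h)).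
  by rewrite !dimv0_mp // -same_support_dimv.
have /card_gt0P[b' _] : 0 < dimv W (t h).
  by rewrite -same_support_dimv; apply/card_gt0P; exists b.
rewrite (tree_indecomposable_mp tree indecV a b) (tree_indecomposable_mp tree indecW _ b').
by congr Some; apply: unique_W.
Qed.

End SameSupport.

Lemma ord_bool_eq (b : bool) (x y : 'I_b) : x = y.
Proof. by apply: card_le1_eq; rewrite card_ord; case: b x y. Qed.

Section Thin.
Variables (I E : finType) (s t : E -> I) (S : {set I}).

(* ['I_(i \in S)] has one element if [i \in S] and none otherwise. *)
Definition thin : F1rep s t :=
  {| sp := fun i => ('I_(i \in S) : finType);
     mp := fun h _ => insub 0;
     mp_inj := fun h x y z _ _ => ord_bool_eq x y |}.

Lemma thin_support : rep_support thin = S.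
Proof. by apply/setP => i; rewrite inE /dimv /= card_ord; case: (i \in S). Qed.

Lemma thin_tag_in (x : elt thin) : tag x \in S.
Proof. by case: x => i [k]; case: (i \in S). Qed.

Lemma thin_mp h (a : sp thin (s h)) (b : sp thin (t h)) : mp a = Some b.
Proof.
by rewrite /= insubT ?(leq_ltn_trans _ (ltn_ord b)) // => ?; congr Some; apply: ord_bool_eq.
Qed.

Lemma thin_linked (x y : elt thin) : adj_in s t S (tag x) (tag y) -> linked thin x y.
Proof.
case: x y => [i a] [j b] /and3P[_ _ /existsP[h]] /= /orP[]/andP[/eqP si /eqP tj];
  subst i j; first exact: linked_mp (thin_mp a b).
by rewrite linked_sym; apply: linked_mp (thin_mp b a).
Qed.

Lemma thin_connect (x y : elt thin) : connected_in s t S -> connect (linked thin) x y.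
Proof.
move=> S_conn; case/connectP: (S_conn _ _ (thin_tag_in x) (thin_tag_in y)) => p.
elim: p x => [|k p IH] x /=.
  by case: x y => [i a] [j b] _ /= ji; subst j; rewrite (ord_bool_eq a b) connect0.
case/andP=> xk path_p last_p; have /and3P[_ kS _] := xk.
have /card_gt0P[c _] : 0 < dimv thin k by rewrite /dimv card_ord kS.
apply: connect_trans (connect1 (thin_linked (y := inelt c) xk)) _.
exact: IH (inelt c) path_p last_p.
Qed.

Lemma thin_indecomposable : S != set0 -> connected_in s t S -> indecomposable thin.
Proof.
move=> /set0Pn[i iS] S_conn; apply/indecomposableP; split => [|x y].
  by exists i; rewrite /dimv card_ord iS.
exact: thin_connect.
Qed.

End Thin.

Lemma nonzero_rep_support (I E : finType) (s t : E -> I) (V : F1rep s t) :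
  nonzero_rep V -> rep_support V != set0.
Proof. by case=> i dim_i; apply/set0Pn; exists i; rewrite inE. Qed.

Theorem mainTheorem7 (I E : finType) (s t : E -> I) (HQ : is_tree s t) :
  (forall V : F1rep s t, indecomposable V ->
     [/\ forall i, dimv V i <= 1,
         connected_in s t [set i | dimv V i == 1]
       & forall h, dimv V (s h) = 1 -> dimv V (t h) = 1 ->
           bijective (fun x : option (sp V (s h)) =>
                        if x is Some y then mp y else None)])
  /\
  [/\ (forall V W : F1rep s t, rep_iso V W -> rep_support V = rep_support W),
      (forall V W : F1rep s t, indecomposable V -> indecomposable W ->
          rep_support V = rep_support W -> rep_iso V W),
      (forall V : F1rep s t, indecomposable V ->
          rep_support V != set0 /\ connected_in s t (rep_support V))
    & (forall S : {set I}, S != set0 -> connected_in s t S ->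
          exists V : F1rep s t, indecomposable V /\ rep_support V = S)].
Proof.
split=> [V indecV|]; first split.
- exact: tree_indecomposable_dimv_le1.
- exact: tree_indecomposable_connected.
- exact: tree_indecomposable_edge_bij.
split.
- exact: rep_iso_support.
- exact: transport_iso.
- move=> V indecV; split; first by case: indecV => /nonzero_rep_support.
  by rewrite tree_indecomposable_support //; apply: tree_indecomposable_connected.
- move=> S S_nz S_conn; exists (thin s t S).
  by split; [apply: thin_indecomposable | apply: thin_support].
Qed.
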